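(* Let $d\ge2$ and let $K\subset\mathbb{T}$ be a closed set with $E_d(K)=K$ having the non-wandering property. Let $y\in K$ be a regular critical value, with neighborhood $U$ and maps $\eta_-(x)=\frac{x}{d}+\frac{j_1}{d}$ on the left component $B_-$ of $U\setminus\{y\}$ and $\eta_+(x)=\frac{x}{d}+\frac{j_2}{d}$ on the right component $B_+$ (with $j_1,j_2\in\{0,\dots,d-1\}$) as in the definition of regularity. Then $j_1\ne j_2$, and every point of $E_d^{-1}(y)\cap K$ is equal to $\frac{y}{d}+\frac{j_1}{d}$ or to $\frac{y}{d}+\frac{j_2}{d}$; in particular $\#(E_d^{-1}(y)\cap K)=2$.
   Context: $\mathbb{T}=\mathbb{R}/\mathbb{Z}$, $E_d(x)=dx\bmod 1$. A point $x\in K$ is a critical value if $\#(E_d^{-1}(x)\cap K)>1$. A critical value $x$ is regular if there is a connected open neighborhood $U$ of $x$ such that for each of the two components $B$ of $U\setminus\{x\}$ there is a continuous $\eta_B:B\to\mathbb{T}$ with $E_d\circ\eta_B=\mathrm{id}_B$ and, for every $z\in B\cap K$, $\eta_B(z)$ is the unique point of $E_d^{-1}(z)\cap K$. $K$ has the non-wandering property if for all $x\in K$ and $\varepsilon>0$ there exist $y\in K$ and $n>0$ with $d(x,y)<\varepsilon$ and $d(x,E_d^n(y))<\varepsilon$. *)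

(* the circle T = R/Z is modelled through Z-periodic subsets
   of R (lifts).  A point of T is represented by any real lift. *)
From Stdlib Require Import Reals ZArith List Rtopology.
Open Scope R_scope.

Definition eqT (x y : R) : Prop := exists n : Z, x - y = IZR n.

(* d_T(x,y) < e, where d_T is the quotient metric on R/Z *)
Definition Tnear (x y e : R) : Prop := exists n : Z, Rabs (x - y - IZR n) < e.

Definition Zperiodic (K : R -> Prop) : Prop :=
  forall (x : R) (n : Z), K x <-> K (x + IZR n).

(* E_d(x) = d x mod 1, on lifts *)
Definition Ed (d : nat) (x : R) : R := INR d * x.

Definition Ed_invariant (d : nat) (K : R -> Prop) : Prop :=
  (forall x, K x -> K (Ed d x)) /\
  (forall y, K y -> exists x, K x /\ eqT (Ed d x) y).

Definition nonwandering (d : nat) (K : R -> Prop) : Prop :=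
  forall x, K x -> forall eps, 0 < eps ->
    exists y (n : nat), K y /\ (0 < n)%nat /\ Tnear x y eps /\
      Tnear x (INR d ^ n * y) eps.

(* The points of E_d^{-1}(y) in T are exactly the (pairwise distinct) points
   (y+j)/d, j = 0..d-1.  preimage_card d K y m : #(E_d^{-1}(y) ∩ K) = m. *)
Definition preimage_card (d : nat) (K : R -> Prop) (y : R) (m : nat) : Prop :=
  exists l : list nat, NoDup l /\
    (forall j, In j l <-> ((j < d)%nat /\ K ((y + INR j) / INR d))) /\
    length l = m.

Definition critical_value (d : nat) (K : R -> Prop) (y : R) : Prop :=
  K y /\ exists m, preimage_card d K y m /\ (1 < m)%nat.

(* Regularity data: U = arc (y-a, y+b) (a connected open neighbourhood of y
   whose complement of y has two components: 0<a, 0<b, a+b<=1),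
   B_- = (y-a,y), B_+ = (y,y+b), eta_-(z) = (z+j1)/d on B_-, eta_+(z) = (z+j2)/d
   on B_+, and for z in B ∩ K, eta_B(z) is the unique point of E_d^{-1}(z) ∩ K. *)
Definition unique_branch (d : nat) (K : R -> Prop) (z : R) (j0 : nat) : Prop :=
  K ((z + INR j0) / INR d) /\
  forall j, (j < d)%nat -> K ((z + INR j) / INR d) -> j = j0.

Definition regular_data (d : nat) (K : R -> Prop) (y a b : R) (j1 j2 : nat)
  : Prop :=
  0 < a /\ 0 < b /\ a + b <= 1 /\ (j1 < d)%nat /\ (j2 < d)%nat /\
  (forall z, y - a < z < y -> K z -> unique_branch d K z j1) /\
  (forall z, y < z < y + b -> K z -> unique_branch d K z j2).

From Stdlib Require Import Reals ZArith List Rtopology.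
From Stdlib Require Import Lra Lia Classical.
Open Scope R_scope.

(* Every point (y + j)/d of E_d^{-1}(y) ∩ K is either isolated in K or a limit
   of other points of K.  It cannot be isolated: by the non-wandering property
   an isolated point of K is periodic, and along a periodic orbit isolation
   propagates forward, so y itself would be isolated; then every preimage of y
   in K is isolated, hence periodic, and two periodic points with the same image
   under E_d coincide, contradicting that y is critical.  So (y + j)/d is a
   limit of points w of K, and E_d(w) is a point of K just to one side of y
   whose unique preimage in K is w; regularity then forces j = j1 or j = j2.
   Since y is critical, both indices actually occur. *)

Lemma eqT_sym x y : eqT x y -> eqT y x.
Proof. intros [n Hn]; exists (- n)%Z; rewrite opp_IZR; lra. Qed.

Lemma eqT_trans x y z : eqT x y -> eqT y z -> eqT x z.
Proof. intros [m Hm] [n Hn]; exists (m + n)%Z; rewrite plus_IZR; lra. Qed.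

Lemma eqT_scale_IZR z x y : eqT x y -> eqT (IZR z * x) (IZR z * y).
Proof. intros [n Hn]; exists (z * n)%Z; rewrite mult_IZR, <- Hn; ring. Qed.

Lemma pow_INR_IZR d m : INR d ^ m = IZR (Z.of_nat (d ^ m)).
Proof. rewrite <- INR_IZR_INZ, pow_INR; reflexivity. Qed.

Lemma pow_S_mul_r d m x : INR d ^ S m * x = INR d ^ m * (INR d * x).
Proof. simpl; ring. Qed.

Lemma eqT_scale_pow d m x y : eqT x y -> eqT (INR d ^ m * x) (INR d ^ m * y).
Proof. rewrite pow_INR_IZR; apply eqT_scale_IZR. Qed.

Lemma Zperiodic_eqT K x y : Zperiodic K -> eqT x y -> K x -> K y.
Proof.
  intros HP [n Hn] Kx.
  replace y with (x + IZR (- n)) by (rewrite opp_IZR; lra).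
  apply HP; exact Kx.
Qed.

Lemma preimage_eqT d y j : (0 < d)%nat -> eqT (INR d * ((y + INR j) / INR d)) y.
Proof.
  intros Hd; exists (Z.of_nat j); rewrite <- INR_IZR_INZ.
  field; apply not_0_INR; lia.
Qed.

Lemma preimage_index_inj d y k1 k2 : (k1 < d)%nat -> (k2 < d)%nat ->
  eqT ((y + INR k1) / INR d) ((y + INR k2) / INR d) -> k1 = k2.
Proof.
  intros Hk1 Hk2 [n Hn].
  assert (Hdiff : INR k1 - INR k2 = INR d * IZR n).
  { rewrite <- Hn; field; apply not_0_INR; lia. }
  rewrite !INR_IZR_INZ, <- minus_IZR, <- mult_IZR in Hdiff; apply eq_IZR in Hdiff.
  destruct (Z.eq_dec n 0) as [->|Hn0]; [lia|].
  destruct (Z_lt_le_dec n 0); nia.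
Qed.

Lemma eqT_preimage_index d x y : (0 < d)%nat -> eqT (INR d * x) y ->
  exists j, (j < d)%nat /\ eqT x ((y + INR j) / INR d).
Proof.
  intros Hd [n Hn].
  assert (Hdiv := Z.div_mod n (Z.of_nat d) ltac:(lia)).
  assert (Hr := Z.mod_pos_bound n (Z.of_nat d) ltac:(lia)).
  exists (Z.to_nat (n mod Z.of_nat d)); split; [lia|].
  exists (n / Z.of_nat d)%Z.
  rewrite INR_IZR_INZ, Z2Nat.id by lia.
  assert (HdR : INR d <> 0) by (apply not_0_INR; lia).
  apply Rmult_eq_reg_l with (INR d); [|exact HdR].
  rewrite INR_IZR_INZ in *.
  replace (IZR (Z.of_nat d) * (x - (y + IZR (n mod Z.of_nat d)) / IZR (Z.of_nat d)))
    with (IZR (Z.of_nat d) * x - y - IZR (n mod Z.of_nat d)) by (field; exact HdR).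
  rewrite Hn, Hdiv at 1; rewrite plus_IZR, mult_IZR; ring.
Qed.

Definition isolated (K : R -> Prop) (x : R) : Prop :=
  exists eps, 0 < eps /\ forall w, K w -> Rabs (w - x) < eps -> w = x.

Definition periodic (d : nat) (x : R) : Prop :=
  exists n, (0 < n)%nat /\ eqT (INR d ^ n * x) x.

Lemma not_isolated_approach K x : ~ isolated K x ->
  forall eps, 0 < eps -> exists w, K w /\ w <> x /\ Rabs (w - x) < eps.
Proof.
  intros Hiso eps Heps; apply NNPP; intros Hfar; apply Hiso.
  exists eps; split; [exact Heps|].
  intros w Kw Hw; apply NNPP; intros Hne; apply Hfar; exists w; auto.
Qed.

Lemma periodic_pow_mul d x n m :
  eqT (INR d ^ n * x) x -> eqT (INR d ^ (n * m) * x) x.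
Proof.
  intros Hper; induction m as [|m IH].
  - rewrite Nat.mul_0_r; exists 0%Z; simpl; ring.
  - rewrite Nat.mul_succ_r, pow_add, Rmult_assoc.
    exact (eqT_trans _ _ _ (eqT_scale_pow d (n * m) _ _ Hper) IH).
Qed.

Lemma periodic_preimages_eqT d x1 x2 :
  periodic d x1 -> periodic d x2 -> eqT (INR d * x1) (INR d * x2) -> eqT x1 x2.
Proof.
  intros [n1 [Hn1 P1]] [n2 [Hn2 P2]] Himg.
  apply (periodic_pow_mul _ _ _ n2) in P1.
  apply (periodic_pow_mul _ _ _ n1) in P2; rewrite Nat.mul_comm in P2.
  destruct (n1 * n2)%nat as [|m] eqn:Hm; [nia|].
  rewrite pow_S_mul_r in P1, P2.
  apply eqT_sym in P1.
  exact (eqT_trans _ _ _ P1 (eqT_trans _ _ _ (eqT_scale_pow d m _ _ Himg) P2)).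
Qed.

Section Dynamics.

Context {d : nat} {K : R -> Prop}.
Hypothesis Hd : (0 < d)%nat.
Hypothesis HP : Zperiodic K.
Hypothesis HE : Ed_invariant d K.

Lemma Ed_invariant_pow n w : K w -> K (INR d ^ n * w).
Proof.
  intros Kw; induction n as [|n IH]; simpl.
  - rewrite Rmult_1_l; exact Kw.
  - rewrite Rmult_assoc; apply (proj1 HE); exact IH.
Qed.

Lemma isolated_Tnear_eqT x eps w :
  (forall v, K v -> Rabs (v - x) < eps -> v = x) -> K w -> Tnear x w eps -> eqT x w.
Proof.
  intros Hiso Kw [n Hn]; exists n.
  enough (w + IZR n = x) by lra.
  apply Hiso.
  - apply HP; exact Kw.
  - rewrite <- Rabs_Ropp; replace (- (w + IZR n - x)) with (x - w - IZR n) by ring.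
    exact Hn.
Qed.

Lemma isolated_periodic x : nonwandering d K -> K x -> isolated K x -> periodic d x.
Proof.
  intros HNW Kx [eps [Heps Hiso]].
  destruct (HNW x Kx eps Heps) as (w & n & Kw & Hn & Hnear & Hnear_n).
  exists n; split; [exact Hn|].
  apply (eqT_trans _ (INR d ^ n * w)).
  - apply eqT_scale_pow, (isolated_Tnear_eqT x eps); assumption.
  - apply eqT_sym, (isolated_Tnear_eqT x eps); [exact Hiso| |exact Hnear_n].
    apply Ed_invariant_pow; exact Kw.
Qed.

(* E_d^m multiplies distances by d^m, so points of K near y land on points of K near x. *)
Lemma isolated_of_pow_eqT m x y : isolated K x -> eqT (INR d ^ m * y) x -> isolated K y.
Proof.
  intros [eps [Heps Hiso]] [c Hc].
  assert (Hp : 0 < INR d ^ m) by (apply pow_lt, lt_0_INR; lia).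
  exists (eps / INR d ^ m); split; [apply Rdiv_lt_0_compat; lra|].
  intros v Kv Hv.
  assert (Hshift : INR d ^ m * v + IZR (- c) = x).
  { apply Hiso.
    - apply HP, Ed_invariant_pow; exact Kv.
    - rewrite opp_IZR.
      replace (INR d ^ m * v + - IZR c - x) with (INR d ^ m * (v - y)) by lra.
      rewrite Rabs_mult, (Rabs_pos_eq (INR d ^ m)) by lra.
      replace eps with (INR d ^ m * (eps / INR d ^ m)) by (field; lra).
      apply Rmult_lt_compat_l; assumption. }
  rewrite opp_IZR in Hshift.
  apply Rmult_eq_reg_l with (INR d ^ m); lra.
Qed.

Lemma isolated_image_of_periodic x y :
  isolated K x -> periodic d x -> eqT (INR d * x) y -> isolated K y.
Proof.
  intros Hiso [[|m] [Hn Hper]] Himg; [lia|].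
  apply (isolated_of_pow_eqT m x); [exact Hiso|].
  apply (eqT_trans _ (INR d ^ m * (INR d * x))).
  - apply eqT_scale_pow, eqT_sym; exact Himg.
  - rewrite <- pow_S_mul_r; exact Hper.
Qed.

Lemma critical_value_two_preimages y : critical_value d K y ->
  exists k1 k2, k1 <> k2 /\ (k1 < d)%nat /\ K ((y + INR k1) / INR d) /\
    (k2 < d)%nat /\ K ((y + INR k2) / INR d).
Proof.
  intros [_ [m [[l [Hnd [Hl Hlen]]] Hm]]].
  destruct l as [|k1 [|k2 l]]; simpl in Hlen; try lia.
  exists k1, k2; split.
  - intros ->; apply NoDup_cons_iff in Hnd; apply (proj1 Hnd); left; reflexivity.
  - destruct (proj1 (Hl k1) (or_introl eq_refl)).
    destruct (proj1 (Hl k2) (or_intror (or_introl eq_refl))).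
    tauto.
Qed.

Lemma critical_value_not_isolated y :
  nonwandering d K -> critical_value d K y -> ~ isolated K y.
Proof.
  intros HNW Hcrit Hiso.
  destruct (critical_value_two_preimages y Hcrit) as (k1 & k2 & Hk12 & Hk1 & K1 & Hk2 & K2).
  assert (Hper : forall k, K ((y + INR k) / INR d) -> periodic d ((y + INR k) / INR d)).
  { intros k Kk; apply isolated_periodic; [exact HNW|exact Kk|].
    apply (isolated_of_pow_eqT 1 y); [exact Hiso|].
    rewrite pow_1; apply preimage_eqT; exact Hd. }
  apply Hk12, (preimage_index_inj d y k1 k2 Hk1 Hk2).
  apply (periodic_preimages_eqT d); [apply Hper; exact K1|apply Hper; exact K2|].
  exact (eqT_trans _ _ _ (preimage_eqT d y k1 Hd) (eqT_sym _ _ (preimage_eqT d y k2 Hd))).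
Qed.

Lemma accumulating_preimage_index y a b j1 j2 j :
  regular_data d K y a b j1 j2 -> (j < d)%nat ->
  ~ isolated K ((y + INR j) / INR d) -> j = j1 \/ j = j2.
Proof.
  intros (Ha & Hb & _ & _ & _ & Hleft & Hright) Hj Hacc.
  set (x := (y + INR j) / INR d) in *.
  assert (HdR : 0 < INR d) by (apply lt_0_INR; exact Hd).
  destruct (not_isolated_approach K x Hacc (Rmin a b / INR d)) as (w & Kw & Hwx & Hw).
  { apply Rdiv_lt_0_compat; [apply Rmin_pos|]; lra. }
  set (z := INR d * w + IZR (- Z.of_nat j)).
  assert (Kz : K z) by (apply HP, (proj1 HE); exact Kw).
  assert (Hzw : (z + INR j) / INR d = w).
  { unfold z; rewrite opp_IZR, <- INR_IZR_INZ; field; lra. }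
  assert (Hzy : z - y = INR d * (w - x)).
  { unfold z, x; rewrite opp_IZR, <- INR_IZR_INZ; field; lra. }
  assert (Hclose : Rabs (z - y) < Rmin a b).
  { rewrite Hzy, Rabs_mult, (Rabs_pos_eq (INR d)) by lra.
    replace (Rmin a b) with (INR d * (Rmin a b / INR d)) by (field; lra).
    apply Rmult_lt_compat_l; assumption. }
  apply Rabs_def2 in Hclose.
  pose proof (Rmin_l a b); pose proof (Rmin_r a b).
  destruct (Rtotal_order w x) as [Hlt|[Heq|Hgt]]; [left| contradiction |right].
  - assert (INR d * (w - x) < 0) by (apply Ropp_lt_cancel; nra).
    apply (proj2 (Hleft z ltac:(lra) Kz) j Hj); rewrite Hzw; exact Kw.
  - assert (0 < INR d * (w - x)) by nra.
    apply (proj2 (Hright z ltac:(lra) Kz) j Hj); rewrite Hzw; exact Kw.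
Qed.

Lemma preimage_index_regular y a b j1 j2 j :
  nonwandering d K -> critical_value d K y -> regular_data d K y a b j1 j2 ->
  (j < d)%nat -> K ((y + INR j) / INR d) -> j = j1 \/ j = j2.
Proof.
  intros HNW Hcrit Hreg Hj Kj.
  destruct (classic (isolated K ((y + INR j) / INR d))) as [Hiso|Hacc].
  - exfalso; apply (critical_value_not_isolated y HNW Hcrit).
    apply (isolated_image_of_periodic _ y Hiso); [|apply preimage_eqT; exact Hd].
    apply isolated_periodic; assumption.
  - exact (accumulating_preimage_index y a b j1 j2 j Hreg Hj Hacc).
Qed.

End Dynamics.

Theorem lemma2 (d : nat) (K : R -> Prop) (y a b : R) (j1 j2 : nat) :
  (2 <= d)%nat ->
  closed_set K -> Zperiodic K -> Ed_invariant d K -> nonwandering d K ->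
  critical_value d K y ->
  regular_data d K y a b j1 j2 ->
  j1 <> j2 /\
  (forall x, K x -> eqT (Ed d x) y ->
     eqT x ((y + INR j1) / INR d) \/ eqT x ((y + INR j2) / INR d)) /\
  preimage_card d K y 2.
Proof.
  intros Hd2 _ HP HE HNW Hcrit Hreg.
  assert (Hd : (0 < d)%nat) by lia.
  pose proof (fun j => preimage_index_regular Hd HP HE y a b j1 j2 j HNW Hcrit Hreg)
    as Hindex.
  destruct (critical_value_two_preimages Hd y Hcrit)
    as (k1 & k2 & Hk12 & Hk1 & K1 & Hk2 & K2).
  assert (Hj12 : j1 <> j2 /\ K ((y + INR j1) / INR d) /\ K ((y + INR j2) / INR d)).
  { destruct (Hindex k1 Hk1 K1) as [->| ->], (Hindex k2 Hk2 K2) as [->| ->];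
      repeat split; (lia || assumption). }
  destruct Hj12 as (Hj12 & Kj1 & Kj2).
  destruct Hreg as (_ & _ & _ & Hj1 & Hj2 & _).
  split; [exact Hj12|split].
  - intros x Kx Hx.
    destruct (eqT_preimage_index d x y Hd Hx) as (j & Hj & Hxj).
    destruct (Hindex j Hj (Zperiodic_eqT K x _ HP Hxj Kx)) as [<-| <-]; auto.
  - exists (j1 :: j2 :: nil); split; [|split; [intros j; split|reflexivity]].
    + constructor; [simpl; intuition|constructor; [intros []|constructor]].
    + intros [<-|[<-|[]]]; split; (lia || assumption).
    + intros [Hj Kj]; destruct (Hindex j Hj Kj) as [<-| <-]; simpl; auto.
Qed.
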